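(* Let $N,k\ge1$ be integers and let $\varepsilon>0$, $A>0$, $c>0$. For $z=(x,y)\in\mathbb{R}^N\times\mathbb{R}^k$ set $\Theta(z)=c\,e^{-\varepsilon\sqrt{A+|x|^4+|y|^2}}$. Then $$\Delta_{\mathcal{G}}\Theta(z)\ge-\varepsilon\,[2(N+2)+k]\,\Theta(z)\qquad\text{for all } z\in\mathbb{R}^{N+k},$$ where $\Delta_{\mathcal{G}}=\Delta_x+|x|^2\Delta_y$.
   Context: $\Delta_x$ and $\Delta_y$ denote the Euclidean Laplacians in $x\in\mathbb{R}^N$ and $y\in\mathbb{R}^k$. *)

From HB Require Import structures.
From mathcomp Require Import all_boot all_order all_algebra.
From mathcomp Require Import all_classical all_reals all_analysis.
Set Implicit Arguments. Unset Strict Implicit. Unset Printing Implicit Defensive.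
Import Order.TTheory GRing.Theory Num.Theory.
Import numFieldNormedType.Exports.
Local Open Scope ring_scope.

Definition sqnorm (R : realType) (n : nat) (x : 'rV[R]_n) : R :=
  \sum_(i < n) x ord0 i ^+ 2.

Definition evec (R : realType) (n : nat) (i : 'I_n) : 'rV[R]_n := delta_mx 0 i.

Definition lap_x (R : realType) (N k : nat) (f : 'rV[R]_N -> 'rV[R]_k -> R)
  (x : 'rV[R]_N) (y : 'rV[R]_k) : R :=
  \sum_(i < N) derive1n 2 (fun t : R => f (x + t *: evec R i) y) 0.

Definition lap_y (R : realType) (N k : nat) (f : 'rV[R]_N -> 'rV[R]_k -> R)
  (x : 'rV[R]_N) (y : 'rV[R]_k) : R :=
  \sum_(j < k) derive1n 2 (fun t : R => f x (y + t *: evec R j)) 0.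

Definition grushin_lap (R : realType) (N k : nat) (f : 'rV[R]_N -> 'rV[R]_k -> R)
  (x : 'rV[R]_N) (y : 'rV[R]_k) : R :=
  lap_x f x y + sqnorm x * lap_y f x y.

Definition Theta (R : realType) (N k : nat) (c eps A : R)
  (x : 'rV[R]_N) (y : 'rV[R]_k) : R :=
  c * expR (- (eps * Num.sqrt (A + sqnorm x ^+ 2 + sqnorm y))).

(* Along a coordinate line, Theta is t |-> c exp(-eps sqrt(S t)) with S a
   positive polynomial. Writing Theta' = g Theta with g = -eps S' / (2 sqrt S),
   one gets Theta'' = (g' + g^2) Theta >= -eps S'' Theta / (2 sqrt S), because
   g^2 >= 0 and the only negative contribution to g' is -eps S'' / (2 sqrt S).
   With S'' = 8 x_i^2 + 4|x|^2 in the direction x_i and S'' = 2 in the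
   direction y_j, summing gives
     Delta_x Theta >= -eps (2N + 4) (|x|^2 / sqrt S) Theta,
     |x|^2 Delta_y Theta >= -eps k (|x|^2 / sqrt S) Theta,
   and |x|^2 <= sqrt S since S >= |x|^4. *)

From HB Require Import structures.
From mathcomp Require Import all_boot all_order all_algebra.
From mathcomp Require Import all_classical all_reals all_analysis.
From mathcomp Require Import ring.
Import Order.TTheory GRing.Theory Num.Theory.
Import numFieldNormedType.Exports.
Set Implicit Arguments. Unset Strict Implicit. Unset Printing Implicit Defensive.
Local Open Scope ring_scope.

Section Sqnorm.
Variables (R : realType) (n : nat).

Lemma sqnorm_ge0 (x : 'rV[R]_n) : 0 <= sqnorm x.
Proof. by apply: sumr_ge0 => i _; apply: sqr_ge0. Qed.

Lemma sqnorm_shift (x : 'rV[R]_n) (i : 'I_n) (t : R) :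
  sqnorm (x + t *: evec R i) = sqnorm x + 2 * x ord0 i * t + t ^+ 2.
Proof.
rewrite /sqnorm (bigD1 i) //= [in RHS](bigD1 i) //= !mxE eqxx mulr1.
rewrite (eq_bigr (fun j => x ord0 j ^+ 2)) => [|j /negbTE ji]; first by ring.
by rewrite !mxE ji andbF mulr0 addr0.
Qed.
End Sqnorm.

Section LogDerive.
Variables (R : realFieldType) (f g : R -> R).
Hypothesis df : forall t : R, is_derive t 1 f (g t * f t).

Lemma derive1n2_logderive (t g' : R) : is_derive t 1 g g' ->
  derive1n 2 f t = (g' + g t ^+ 2) * f t.
Proof.
move=> dg.
have -> : derive1n 2 f = derive1 (fun s => g s * f s).
  rewrite derive1nS derive1n1; congr derive1.
  by apply/funext => s; rewrite derive1E derive_val.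
rewrite derive1E; have [_ ->] := is_deriveM dg (df t).
rewrite /GRing.scale /=; ring.
Qed.
End LogDerive.

Section ExpSqrt.
Variables (R : realType) (c eps : R) (S S' : R -> R).

Definition expNsqrt (t : R) : R := c * expR (- (eps * Num.sqrt (S t))).

Lemma is_derive_expNsqrt (t : R) : 0 < S t -> is_derive t 1 S (S' t) ->
  is_derive t 1 expNsqrt
    (- (eps / 2 * (S' t / Num.sqrt (S t))) * expNsqrt t).
Proof.
move=> St dS.
have d_sqrt := is_derive1_comp (is_derive1_sqrt St) dS.
have d_exp := is_derive1_comp (is_derive_expR _) (is_deriveN (is_deriveZ eps d_sqrt)).
have := is_deriveZ c d_exp.
move/is_derive_eq; apply; rewrite /expNsqrt /GRing.scale /= invfM; ring.
Qed.

Lemma is_derive_div_sqrt (t S'' : R) : 0 < S t -> is_derive t 1 S (S' t) ->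
  is_derive t 1 S' S'' ->
  is_derive t 1 (fun s => S' s / Num.sqrt (S s))
    (S'' / Num.sqrt (S t) - S' t ^+ 2 / (2 * Num.sqrt (S t) ^+ 3)).
Proof.
move=> St dS dS'.
have r_neq0 : Num.sqrt (S t) != 0 by rewrite gt_eqF // sqrtr_gt0.
have d_sqrt := is_derive1_comp (is_derive1_sqrt St) dS.
have := is_deriveM dS' (is_deriveV (f := fun s => Num.sqrt (S s)) r_neq0 d_sqrt).
by move/is_derive_eq; apply; rewrite /GRing.scale /=; field.
Qed.

Lemma expNsqrt_ge0 (t : R) : 0 <= c -> 0 <= expNsqrt t.
Proof. by move=> c_ge0; rewrite mulr_ge0 // expR_ge0. Qed.

Lemma derive1n2_expNsqrt_ge (t S'' : R) : 0 <= c -> 0 <= eps ->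
  (forall s, 0 < S s) -> (forall s : R, is_derive s 1 S (S' s)) ->
  is_derive t 1 S' S'' ->
  - (eps * S'' / (2 * Num.sqrt (S t))) * expNsqrt t
    <= derive1n 2 expNsqrt t.
Proof.
move=> c_ge0 eps_ge0 S_gt0 dS dS'.
have d_ratio := is_derive_div_sqrt (S_gt0 t) (dS t) dS'.
rewrite (derive1n2_logderive (fun s => is_derive_expNsqrt (S_gt0 s) (dS s))
  (is_deriveN (is_deriveZ (eps / 2) d_ratio))).
apply: ler_wpM2r; first exact: expNsqrt_ge0.
set r := Num.sqrt (S t); have r_gt0 : 0 < r by rewrite sqrtr_gt0.
rewrite /GRing.scale /= -subr_ge0.
have -> : - (eps / 2 * (S'' / r - S' t ^+ 2 / (2 * r ^+ 3))) +
    (- (eps / 2 * (S' t / r))) ^+ 2 - - (eps * S'' / (2 * r)) =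
  eps / 4 * (S' t ^+ 2 / r ^+ 3) + (eps / 2 * (S' t / r)) ^+ 2.
  by field; rewrite gt_eqF.
have r3_ge0 : 0 <= r ^+ 3 by rewrite exprn_ge0 // ltW.
by rewrite addr_ge0 ?sqr_ge0 // mulr_ge0 ?divr_ge0 ?sqr_ge0.
Qed.
End ExpSqrt.

Section ThetaLine.
Variables (R : realType) (N k : nat) (eps A c : R).
Hypotheses (eps_ge0 : 0 <= eps) (A_gt0 : 0 < A) (c_ge0 : 0 <= c).

Lemma Theta_arg_gt0 (x : 'rV[R]_N) (y : 'rV[R]_k) :
  0 < A + sqnorm x ^+ 2 + sqnorm y.
Proof. by rewrite -addrA ltr_wpDr // addr_ge0 ?sqr_ge0 ?sqnorm_ge0. Qed.

(* With analysis loaded, [p^`()] and [derivE] are about derivatives of functions;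
   the polynomial ones are [deriv] and [poly.derivE]. *)
Lemma derive1n2_Theta_poly_line (X : R -> 'rV[R]_N) (Y : R -> 'rV[R]_k)
    (p : {poly R}) :
  (forall t, p.[t] = A + sqnorm (X t) ^+ 2 + sqnorm (Y t)) ->
  - (eps * (deriv (deriv p)).[0]
        / (2 * Num.sqrt (A + sqnorm (X 0) ^+ 2 + sqnorm (Y 0))))
      * Theta c eps A (X 0) (Y 0)
    <= derive1n 2 (fun t => Theta c eps A (X t) (Y t)) 0.
Proof.
move=> pE.
have -> : (fun t => Theta c eps A (X t) (Y t)) = expNsqrt c eps (horner p).
  by apply/funext => t; rewrite /expNsqrt pE.
have -> : Theta c eps A (X 0) (Y 0) = expNsqrt c eps (horner p) 0.
  by rewrite /expNsqrt pE.
rewrite -pE.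
by apply: derive1n2_expNsqrt_ge => // t; rewrite pE Theta_arg_gt0.
Qed.

Lemma derive1n2_Theta_x (x : 'rV[R]_N) (y : 'rV[R]_k) (i : 'I_N) :
  - (eps * (8 * x ord0 i ^+ 2 + 4 * sqnorm x)
        / (2 * Num.sqrt (A + sqnorm x ^+ 2 + sqnorm y))) * Theta c eps A x y
    <= derive1n 2 (fun t => Theta c eps A (x + t *: evec R i) y) 0.
Proof.
pose q : {poly R} := (sqnorm x)%:P + (2 * x ord0 i) *: 'X + 'X^2.
pose p : {poly R} := (A + sqnorm y)%:P + q * q.
have pE t : p.[t] = A + sqnorm (x + t *: evec R i) ^+ 2 + sqnorm y.
  by rewrite !hornerE sqnorm_shift; ring.
have p2 : (deriv (deriv p)).[0] = 8 * x ord0 i ^+ 2 + 4 * sqnorm x.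
  by rewrite !poly.derivE !hornerE /=; ring.
by have := derive1n2_Theta_poly_line pE; rewrite p2 scale0r addr0.
Qed.

Lemma derive1n2_Theta_y (x : 'rV[R]_N) (y : 'rV[R]_k) (j : 'I_k) :
  - (eps * 2 / (2 * Num.sqrt (A + sqnorm x ^+ 2 + sqnorm y))) * Theta c eps A x y
    <= derive1n 2 (fun t => Theta c eps A x (y + t *: evec R j)) 0.
Proof.
pose p : {poly R} :=
  (A + sqnorm x ^+ 2 + sqnorm y)%:P + (2 * y ord0 j) *: 'X + 'X^2.
have pE t : p.[t] = A + sqnorm x ^+ 2 + sqnorm (y + t *: evec R j).
  by rewrite !hornerE sqnorm_shift; ring.
have p2 : (deriv (deriv p)).[0] = 2 by rewrite !poly.derivE !hornerE /=; ring.
by have := derive1n2_Theta_poly_line pE; rewrite p2 scale0r addr0.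
Qed.

Lemma sqnorm_le_sqrt_Theta_arg (x : 'rV[R]_N) (y : 'rV[R]_k) :
  sqnorm x <= Num.sqrt (A + sqnorm x ^+ 2 + sqnorm y).
Proof.
rewrite -[leLHS]ger0_norm ?sqnorm_ge0 // -sqrtr_sqr ler_wsqrtr //.
by rewrite -addrA addrCA lerDl addr_ge0 ?sqnorm_ge0 // ltW.
Qed.

Lemma lap_x_Theta_ge (x : 'rV[R]_N) (y : 'rV[R]_k) :
  - (eps * (2 * (N + 2))%:R
       * (sqnorm x / Num.sqrt (A + sqnorm x ^+ 2 + sqnorm y)))
      * Theta c eps A x y
    <= lap_x (Theta c eps A) x y.
Proof.
apply: le_trans (ler_sum _ (fun i _ => derive1n2_Theta_x x y i)).
set r := Num.sqrt _; have r_gt0 : 0 < r by rewrite sqrtr_gt0 Theta_arg_gt0.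
rewrite -mulr_suml sumrN le_eqVlt; apply/predU1P; left; congr (- _ * _).
rewrite -mulr_suml -mulr_sumr big_split /= -mulr_sumr sumr_const card_ord.
by rewrite -/(sqnorm x) -mulr_natr natrM natrD; field; rewrite gt_eqF.
Qed.

Lemma lap_y_Theta_ge (x : 'rV[R]_N) (y : 'rV[R]_k) :
  - (eps * k%:R / Num.sqrt (A + sqnorm x ^+ 2 + sqnorm y)) * Theta c eps A x y
    <= lap_y (Theta c eps A) x y.
Proof.
apply: le_trans (ler_sum _ (fun j _ => derive1n2_Theta_y x y j)).
set r := Num.sqrt _; have r_gt0 : 0 < r by rewrite sqrtr_gt0 Theta_arg_gt0.
rewrite sumr_const card_ord -mulr_natr le_eqVlt; apply/predU1P; left.
by field; rewrite gt_eqF.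
Qed.

Lemma grushin_lap_Theta_ge (x : 'rV[R]_N) (y : 'rV[R]_k) :
  - (eps * (2 * (N + 2) + k)%:R) * Theta c eps A x y
    <= grushin_lap (Theta c eps A) x y.
Proof.
pose r := Num.sqrt (A + sqnorm x ^+ 2 + sqnorm y).
have r_gt0 : 0 < r by rewrite sqrtr_gt0 Theta_arg_gt0.
set T := Theta c eps A x y; have T_ge0 : 0 <= T by rewrite mulr_ge0 ?expR_ge0.
have ratio_le1 : sqnorm x / r <= 1.
  by rewrite ler_pdivrMr // mul1r sqnorm_le_sqrt_Theta_arg.
have lap_y_ge := ler_wpM2l (sqnorm_ge0 x) (lap_y_Theta_ge x y).
apply: le_trans (lerD (lap_x_Theta_ge x y) lap_y_ge).
have -> : - (eps * (2 * (N + 2))%:R * (sqnorm x / r)) * T +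
    sqnorm x * (- (eps * k%:R / r) * T) =
  - (eps * (2 * (N + 2) + k)%:R * T * (sqnorm x / r)) by rewrite natrD; ring.
by rewrite mulNr lerN2 ler_piMr // mulr_ge0 // mulr_ge0.
Qed.
End ThetaLine.

Theorem lemma4 (R : realType) (N k : nat) (eps A c : R) :
  (1 <= N)%N -> (1 <= k)%N -> 0 < eps -> 0 < A -> 0 < c ->
  forall (x : 'rV[R]_N) (y : 'rV[R]_k),
    - (eps * (2 * (N + 2) + k)%:R) * Theta c eps A x y
      <= grushin_lap (Theta c eps A) x y.
Proof.
move=> _ _ eps_gt0 A_gt0 c_gt0 x y.
exact: grushin_lap_Theta_ge (ltW eps_gt0) A_gt0 (ltW c_gt0) x y.
Qed.
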